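(* For each $i\in\{2,3,4\}$, the families $\mathrm{SLT}_1$ and $\mathrm{REG}_i^Z$ are incomparable, i.e., $\mathrm{SLT}_1\not\subseteq\mathrm{REG}_i^Z$ and $\mathrm{REG}_i^Z\not\subseteq\mathrm{SLT}_1$.
   Context: Strictly locally testable languages: let $V$ be an alphabet and $k\ge1$. For $B,I,E\subseteq V^k$ and $F\subseteq V^{\le k-1}$, $\mathrm{slt}(B,I,E,F)$ is the language over $V$ consisting of all words in $F$ together with all words $a_1\cdots a_n$ ($a_i\in V$, $n\ge k$) with $a_1\cdots a_k\in B$, $a_{j+1}\cdots a_{j+k}\in I$ for all $1\le j\le n-k-1$, and $a_{n-k+1}\cdots a_n\in E$. $\mathrm{SLT}_k$ is the family of languages of this form. For a regular language $L\subseteq V^*$, $\mathrm{State}(L)$ is the minimum number of states of a deterministic finite automaton over $V$ with total transition function accepting $L$; $\mathrm{REG}_n^Z=\{L\text{ regular}:\mathrm{State}(L)\le n\}$. *)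

From mathcomp Require Import all_boot.
Set Implicit Arguments. Unset Strict Implicit. Unset Printing Implicit Defensive.

(* slt k B I E F: words of length <= k-1 in F, plus words a_1..a_n (n >= k)
   with a_1..a_k in B, a_{j+1}..a_{j+k} in I for 1 <= j <= n-k-1,
   and a_{n-k+1}..a_n in E.  B, I, E are only ever queried on words of
   length k, F only on words of length <= k-1, so arbitrary predicates give
   exactly the family of the paper. *)
Definition slt (V : finType) (k : nat) (B I E F : pred (seq V)) : pred (seq V) :=
  fun w =>
    let n := size w in
    ((n <= k.-1) && F w) ||
    [&& k <= n, B (take k w),
        all (fun j => I (take k (drop j w))) (iota 1 (n - k - 1))
      & E (drop (n - k) w)].

Definition SLT (V : finType) (k : nat) (L : pred (seq V)) : Prop :=
  exists B I E F : pred (seq V), forall w, L w = slt k B I E F w.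

Definition dfa_accepts (V Q : finType) (q0 : Q) (delta : Q -> V -> Q)
  (fin : pred Q) (w : seq V) : bool := fin (foldl delta q0 w).

Definition REGZ (V : finType) (n : nat) (L : pred (seq V)) : Prop :=
  exists (Q : finType) (q0 : Q) (delta : Q -> V -> Q) (fin : pred Q),
    #|Q| <= n /\ forall w, L w = dfa_accepts q0 delta fin w.

From mathcomp Require Import all_boot.
Set Implicit Arguments. Unset Strict Implicit. Unset Printing Implicit Defensive.

(* SLT_1 is not contained in REG_4^Z (hence in no REG_i^Z, i <= 4): by the
   Myhill-Nerode argument, pairwise distinguishable words must reach pairwise
   distinct states of any DFA, and the SLT_1 language
     L_abc = "first letter in {a,b}, inner letters in {a,b}, last in {a,c}"
   over {a,b,c} has five pairwise distinguishable words  e, a, b, c, ac.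

   REG_2^Z (hence every REG_i^Z, i >= 2) is not contained in SLT_1: the words
   of even length over a one-letter alphabet form a two-state language, but
   membership of a word x y z (|y| >= 0) in an SLT_1 language only depends on
   x, z and the SET of letters of y, so aa and aaaa in L force aaa in L. *)

Lemma REGZ_mono (V : finType) (n m : nat) (L : pred (seq V)) :
  n <= m -> REGZ n L -> REGZ m L.
Proof.
move=> le_nm [Q [q0 [delta [fin [cardQ accL]]]]].
by exists Q, q0, delta, fin; split; first exact: leq_trans le_nm.
Qed.

(* Myhill-Nerode lower bound: a family of pairwise L-distinguishable words,
   indexed by J, forces every DFA accepting L to have at least #|J| states,
   since the words must lead to pairwise distinct states. *)
Lemma distinguishable_card_le (V J : finType) (L : pred (seq V))
    (w : J -> seq V) (n : nat) :
  (forall j k, j != k -> exists s, L (w j ++ s) != L (w k ++ s)) ->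
  REGZ n L -> #|J| <= n.
Proof.
move=> distinct [Q [q0 [delta [fin [cardQ accL]]]]].
pose state j := foldl delta q0 (w j).
suff inj_state : injective state by exact: leq_trans (leq_card _ inj_state) cardQ.
move=> j k same_state; apply/eqP/negPn/negP => /distinct [s].
by rewrite !accL /dfa_accepts !foldl_cat -/(state j) -/(state k) same_state eqxx.
Qed.

Lemma all_windows1 (V : finType) (P : pred (seq V)) (y t : seq V) :
  all (fun j => P (take 1 (drop j (y ++ t)))) (iota 0 (size y))
  = all (fun a => P [:: a]) y.
Proof.
elim: y => [|a y IHy] //=.
by rewrite -(addn0 1) iotaDl all_map -IHy take0.
Qed.

Lemma slt1_inner (V : finType) (B I E F : pred (seq V)) (x z : V) (y : seq V) :
  slt 1 B I E F (x :: y ++ [:: z]) = [&& B [:: x], all (fun a => I [:: a]) y & E [:: z]].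
Proof.
rewrite /slt /= size_cat addn1 subn1 /= take0 drop_size_cat //.
by rewrite -(@all_windows1 _ I y [:: z]) -(addn0 1) iotaDl all_map.
Qed.

Lemma SLT1_inner_subset (V : finType) (L : pred (seq V)) (x z : V) (y y' : seq V) :
  SLT 1 L -> {subset y' <= y} -> L (x :: y ++ [:: z]) -> L (x :: y' ++ [:: z]).
Proof.
move=> [B [I [E [F defL]]]] sub_y'y; rewrite !defL !slt1_inner.
case/and3P=> -> innerI ->; rewrite andbT /=.
by apply/allP=> a /sub_y'y; apply: (allP innerI).
Qed.

Definition la : 'I_3 := @Ordinal 3 0 erefl.
Definition lb : 'I_3 := @Ordinal 3 1 erefl.
Definition lc : 'I_3 := @Ordinal 3 2 erefl.

Definition L_abc : pred (seq 'I_3) :=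
  let in_ab s := (s == [:: la]) || (s == [:: lb]) in
  slt 1 in_ab in_ab (fun s => (s == [:: la]) || (s == [:: lc])) pred0.

Definition five_words (j : 'I_5) : seq 'I_3 :=
  nth [::] [:: [::]; [:: la]; [:: lb]; [:: lc]; [:: la; lc]] j.

Lemma five_words_distinguishable (j k : 'I_5) : j != k ->
  exists s, L_abc (five_words j ++ s) != L_abc (five_words k ++ s).
Proof.
move=> neq_jk.
suff /hasP[s _ ?] : has (fun s => L_abc (five_words j ++ s) != L_abc (five_words k ++ s))
                      [:: [::]; [:: la]; [:: lc]] by exists s.
by move: j k neq_jk => [[|[|[|[|[|j]]]]] ?] [[|[|[|[|[|k]]]]] ?].
Qed.

Lemma L_abc_not_REGZ4 : ~ REGZ 4 L_abc.
Proof.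
by move=> /(distinguishable_card_le five_words_distinguishable); rewrite card_ord.
Qed.

Definition L_even : pred (seq unit) := fun w => ~~ odd (size w).

Lemma L_even_REGZ2 : REGZ 2 L_even.
Proof.
exists bool, true, (fun q _ => ~~ q), id; split; first by rewrite card_bool.
rewrite /L_even /dfa_accepts => w; elim/last_ind: w => [|w a IHw] //.
by rewrite foldl_rcons size_rcons /= -IHw.
Qed.

(* aaaa is in L_even, and aa has fewer inner letters, so aaa would be too. *)
Lemma L_even_not_SLT1 : ~ SLT 1 L_even.
Proof.
move=> sltL.
have aaa_in : L_even (tt :: [:: tt] ++ [:: tt]).
  by apply: (SLT1_inner_subset (y := [:: tt; tt]) sltL) => // -[]; rewrite inE.
by move: aaa_in.
Qed.

Theorem mainTheorem8 (i : nat) (hi : 2 <= i <= 4) :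
  (exists (V : finType) (L : pred (seq V)), SLT 1 L /\ ~ REGZ i L) /\
  (exists (V : finType) (L : pred (seq V)), REGZ i L /\ ~ SLT 1 L).
Proof.
case/andP: hi => le2i lei4; split.
- exists ('I_3 : finType), L_abc; split; first by do 4 eexists.
  by move=> /(REGZ_mono lei4); exact: L_abc_not_REGZ4.
- exists (unit : finType), L_even; split; last exact: L_even_not_SLT1.
  exact: REGZ_mono le2i L_even_REGZ2.
Qed.
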